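(* Let $k=\mathbb Q$, let $L$ be a totally real number field with $r=[L:\mathbb Q]$, let $V$ be an $L$-vector space of dimension $m\ge5$ with nondegenerate symmetric $L$-bilinear form $\Phi=d_1X_1^2+\dots+d_mX_m^2$ ($d_i\in L$), and let $\phi=\mathrm{tr}_{L/\mathbb Q}\circ\Phi$ on $V$ viewed as a $\mathbb Q$-vector space. Let $F/k$ be a finite Galois extension containing $L$, $\sqrt{-1}$ and $\sqrt{\sigma(d_i)}$ for all $i$ and all embeddings $\sigma\colon L\hookrightarrow F$, and let $\sigma_1,\dots,\sigma_r$ be these embeddings. Then the restriction of the spin representation $\rho\colon\mathfrak{so}(\phi)\otimes_kF\to\mathrm{End}_F(C^{+}(V\otimes_kF))$ to $\mathfrak g\otimes_kF=\bigoplus_{i=1}^r(\mathfrak{so}(\Phi)\otimes_{L,\sigma_i}F)\subset\mathfrak{so}(\phi)\otimes_kF$ is isomorphic to $2^{r-1}$ copies of the exterior tensor product $\rho_1\boxtimes\dots\boxtimes\rho_r$, where $\rho_i\colon\mathfrak{so}(\Phi)\otimes_{L,\sigma_i}F\to\mathrm{End}_F(C^{+}(V\otimes_{L,\sigma_i}F))$ is the spin representation.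
   Context: $\mathfrak g=\mathrm{Res}_{L/\mathbb Q}(\mathfrak{so}(\Phi))$, embedded in $\mathfrak{so}(\phi)$ via the forgetful functor; after extending scalars the embedding is block diagonal $(M_1,\dots,M_r)\mapsto\mathrm{diag}(M_1,\dots,M_r)$ with respect to $V\otimes_kF=\bigoplus_i V\otimes_{L,\sigma_i}F$. $C^+(\cdot)$ denotes the even Clifford algebra (of $(V\otimes_kF,\phi)$, resp. of $(V\otimes_{L,\sigma_i}F,\Phi)$); the spin representation of an orthogonal Lie algebra on the even Clifford algebra is the one obtained by identifying the orthogonal Lie algebra with the Lie algebra of the Clifford group and letting it act by left multiplication. *)

From HB Require Import structures.
From mathcomp Require Import all_boot all_order all_algebra all_field.
Set Implicit Arguments.
Unset Strict Implicit.
Unset Printing Implicit Defensive.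
Import Order.TTheory GRing.Theory Num.Theory.
Local Open Scope ring_scope.

(* F : splittingFieldType rat is a finite normal extension of Q; in   *)
(* characteristic 0 this is exactly a finite Galois extension of Q.   *)

(* embedding of L into C lands in algC and extends to F (F/L algebraic),*)
(* so it suffices to quantify over ring morphisms F -> algC.          *)
Definition totally_real (F : splittingFieldType rat) (L : {subfield F}) :=
  forall (tau : {rmorphism F -> algC}) (x : F), x \in L -> tau x \is Num.real.

(* Clifford algebra of a diagonal quadratic space (F^I, sum a_i X_i^2) *)
(* over a field F, in the standard basis e_S (S a subset of I; e_S is *)
(* the ordered product of the e_i, i in S, for the order enum_rank).  *)
(* Relations: e_i e_j = - e_j e_i (i<>j), e_i^2 = a_i, i.e. v^2 = q(v).*)
(* Elements are coefficient functions {set I} -> F.                   *)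
Section Clifford.
Variables (F : fieldType) (I : finType).

Definition symd (S T : {set I}) : {set I} := (S :\: T) :|: (T :\: S).

(* number of inversions when concatenating e_S e_T *)
Definition cl_inv (S T : {set I}) : nat :=
  #|[set p : I * I | [&& p.1 \in S, p.2 \in T & (enum_rank p.2 < enum_rank p.1)%N]]|.

(* e_S * e_T = cl_coef a S T * e_(S symd T) *)
Definition cl_coef (a : I -> F) (S T : {set I}) : F :=
  (-1) ^+ cl_inv S T * \prod_(i in S :&: T) a i.

Definition clmul (a : I -> F) (x y : {set I} -> F) : {set I} -> F :=
  fun U => \sum_(S : {set I}) \sum_(T : {set I})
             x S * y T * cl_coef a S T * (U == symd S T)%:R.

Definition clbasis (S : {set I}) : {set I} -> F := fun U => (U == S)%:R.
Definition clgen (i : I) : {set I} -> F := clbasis [set i].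

(* Orthogonal Lie algebra so(q) of the form sum a_i X_i^2, with      *)
(* matrices as functions I -> I -> F acting on column vectors:        *)
(* A^T D + D A = 0 with D = diag a, written entrywise.                *)
Definition is_so (a : I -> F) (A : I -> I -> F) : Prop :=
  forall i j, a i * A i j + a j * A j i = 0.

(* The element of C^+ corresponding to A in so(q) under the identification *)
(* of so(q) with the Lie algebra of the Clifford group:              *)
(* theta(A) = 1/4 sum_k A(e_k) e^k, with dual basis e^k = e_k / a_k;  *)
(* it is the unique bivector with theta(A) v - v theta(A) = A v.      *)
Definition spin_elt (a : I -> F) (A : I -> I -> F) : {set I} -> F :=
  fun U => \sum_(i : I) \sum_(k : I)
             (A i k / (4%:R * a k)) * clmul a (clgen i) (clgen k) U.

(* index type of the standard basis of the even Clifford algebra C^+ *)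
Definition evset : predArgType := {S : {set I} | ~~ odd #|S|}.

(* Spin representation: matrix (in the basis e_T, T even) of left    *)
(* multiplication by theta(A) on C^+ : entry (U,T) is the coefficient *)
(* of e_U in theta(A) e_T.                                            *)
Definition spin_rep (a : I -> F) (A : I -> I -> F) : evset -> evset -> F :=
  fun U T => clmul a (spin_elt a A) (clbasis (val T)) (val U).

End Clifford.

Section Reps.
Variable F : fieldType.

Definition rep_iso (G : Type) (dom : G -> Prop) (X Y : finType)
    (rho : G -> X -> X -> F) (tau : G -> Y -> Y -> F) : Prop :=
  exists (P : Y -> X -> F) (Q : X -> Y -> F),
    [/\ (forall y y', \sum_(x : X) P y x * Q x y' = (y == y')%:R),
        (forall x x', \sum_(y : Y) Q x y * P y x' = (x == x')%:R)
      & (forall g, dom g -> forall y x,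
           \sum_(x' : X) P y x' * rho g x' x
           = \sum_(y' : Y) tau g y y' * P y' x)].

(* exterior tensor product of the matrices R_0, ..., R_(n-1) acting  *)
(* (as Lie algebra elements) on the tensor product, basis {ffun 'I_n -> Y}: *)
(* sum_i 1 (x) ... (x) R_i (x) ... (x) 1.                             *)
Definition ext_tensor (n : nat) (Y : finType) (R : 'I_n -> Y -> Y -> F)
  : {ffun 'I_n -> Y} -> {ffun 'I_n -> Y} -> F :=
  fun u w => \sum_(i < n) R i (u i) (w i) *
               \prod_(j < n | j != i) (u j == w j)%:R.

Definition copies (k : nat) (Y : finType) (R : Y -> Y -> F)
  : 'I_k * Y -> 'I_k * Y -> F :=
  fun p q => (p.1 == q.1)%:R * R p.2 q.2.

Definition blockdiag (r m : nat) (M : 'I_r -> 'I_m -> 'I_m -> F)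
  : 'I_r * 'I_m -> 'I_r * 'I_m -> F :=
  fun p q => (p.1 == q.1)%:R * M p.1 p.2 q.2.

End Reps.
Arguments copies {F} k {Y} R.

From HB Require Import structures.
From mathcomp Require Import all_boot all_order all_algebra all_field.
From mathcomp Require Import ring zify.
Set Implicit Arguments.
Unset Strict Implicit.
Unset Printing Implicit Defensive.
Import Order.TTheory GRing.Theory Num.Theory.
Local Open Scope ring_scope.

(* After extending scalars, V (x) F is the orthogonal sum of the spaces
   V (x)_{sigma_i} F, with orthogonal basis e_(i,j) and e_(i,j)^2 = sigma_i(d_j).
   Up to sign, a monomial e_S of C^+ is the product of its slices e_(S_i) over
   the blocks.  The slice parities have even sum (2^(r-1) possibilities), and
   toggling a fixed index z in every odd slice turns S into a family of even
   sets, i.e. a basis vector of C^+_1 (x) ... (x) C^+_r.  A bivector e_p e_q of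
   block i is even, so left multiplication by it passes the other blocks
   without sign and changes only slice i; after rescaling each basis vector by
   the nonzero coefficient relating e_(S_i) to e_(S_i + z) e_z, its matrix is
   exactly that of the i-th factor. *)

Section SymmetricDifference.
Variable T : finType.
Implicit Types A B C : {set T}.

Lemma in_symd A B x : (x \in symd A B) = (x \in A) (+) (x \in B).
Proof. by rewrite /symd !inE; case: (x \in A); case: (x \in B). Qed.

Lemma symdA A B C : symd A (symd B C) = symd (symd A B) C.
Proof. by apply/setP => x; rewrite !in_symd addbA. Qed.

Lemma symdK A B : symd (symd A B) B = A.
Proof. by apply/setP => x; rewrite !in_symd -addbA addbb addbF. Qed.

Lemma symd0l A : symd set0 A = A.
Proof. by apply/setP => x; rewrite in_symd inE. Qed.

Lemma odd_symd A B : odd #|symd A B| = odd #|A| (+) odd #|B|.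
Proof.
have disjD : (A :\: B) :&: (B :\: A) = set0.
  by apply/setP => x; rewrite !inE; case: (x \in A); case: (x \in B).
have cardAB := cardsID B A; have cardBA := cardsID A B; rewrite setIC in cardBA.
rewrite /symd cardsU disjD cards0 subn0 -cardAB -cardBA !oddD.
by case: (odd #|A :\: B|); case: (odd #|B :\: A|); case: (odd #|A :&: B|).
Qed.

End SymmetricDifference.

Section CliffordCoefficients.
Variables (F : fieldType) (I : finType).
Implicit Types (a : I -> F) (A B C S T U : {set I}).

Lemma cl_invE S T : cl_inv S T =
  (\sum_(x : I) \sum_(y : I)
     ((x \in S) && (y \in T) && (enum_rank y < enum_rank x)%N : nat))%N.
Proof.
rewrite /cl_inv -sum1_card pair_big /= big_mkcond /=.
by apply: eq_bigr => [[x y]] _; rewrite inE /= andbA; case: (_ && _ && _).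
Qed.

Lemma signr_cl_inv S T : (-1) ^+ cl_inv S T = \prod_(x : I) \prod_(y : I)
   (-1) ^+ ((x \in S) && (y \in T) && (enum_rank y < enum_rank x)%N) :> F.
Proof. by rewrite cl_invE -prodrXr; apply: eq_bigr => x _; rewrite -prodrXr. Qed.

Lemma signr_cl_inv_symdl A B C : (-1) ^+ cl_inv (symd A B) C =
   (-1) ^+ cl_inv A C * (-1) ^+ cl_inv B C :> F.
Proof.
rewrite !signr_cl_inv -big_split; apply: eq_bigr => x _; rewrite -big_split.
apply: eq_bigr => y _; rewrite in_symd.
by case: (x \in A); case: (x \in B); case: (y \in C); case: (_ < _)%N;
  rewrite /= ?expr0 ?expr1 ?mulr1 ?mul1r ?mulrNN ?mulr1.
Qed.

Lemma signr_cl_inv_symdr A B C : (-1) ^+ cl_inv A (symd B C) =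
   (-1) ^+ cl_inv A B * (-1) ^+ cl_inv A C :> F.
Proof.
rewrite !signr_cl_inv -big_split; apply: eq_bigr => x _; rewrite -big_split.
apply: eq_bigr => y _; rewrite in_symd.
by case: (x \in A); case: (y \in B); case: (y \in C); case: (_ < _)%N;
  rewrite /= ?expr0 ?expr1 ?mulr1 ?mul1r ?mulrNN ?mulr1.
Qed.

Lemma prod_setI_symd a A B C :
  (\prod_(i in A :&: B) a i) * (\prod_(i in symd A B :&: C) a i) =
  (\prod_(i in B :&: C) a i) * (\prod_(i in A :&: symd B C) a i).
Proof.
rewrite ![\prod_(i in _) _]big_mkcond -!big_split; apply: eq_bigr => x _.
rewrite !in_setI !in_symd.
by case: (x \in A); case: (x \in B); case: (x \in C); rewrite /= ?mulr1 ?mul1r.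
Qed.

(* the cocycle identity expressing (e_A e_B) e_C = e_A (e_B e_C) *)
Lemma cl_coef_assoc a A B C :
  cl_coef a A B * cl_coef a (symd A B) C = cl_coef a B C * cl_coef a A (symd B C).
Proof.
rewrite /cl_coef signr_cl_inv_symdl signr_cl_inv_symdr.
have := prod_setI_symd a A B C.
set pAB := \prod_(i in A :&: B) a i; set pABC := \prod_(i in symd A B :&: C) a i.
set pBC := \prod_(i in B :&: C) a i; set pABC' := \prod_(i in A :&: symd B C) a i.
move=> eq_prod.
transitivity ((-1) ^+ cl_inv A B * (-1) ^+ cl_inv A C * (-1) ^+ cl_inv B C
              * (pAB * pABC) :> F); first by ring.
by rewrite eq_prod; ring.
Qed.

Lemma cl_coef_neq0 a A B : (forall i, a i != 0) -> cl_coef a A B != 0.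
Proof.
by move=> a_neq0; rewrite mulf_neq0 ?signr_eq0 //; apply/prodf_neq0 => i _.
Qed.

Lemma clmul_clbasis_r a x T U : clmul a x (clbasis F T) U =
  \sum_S x S * cl_coef a S T * (U == symd S T)%:R.
Proof.
apply: eq_bigr => S _; rewrite (bigD1 T) //= /clbasis eqxx mulr1.
by rewrite big1 ?addr0 // => T' /negbTE ->; rewrite !mulr0 !mul0r.
Qed.

Lemma clmul_clgen a p q S : clmul a (clgen F p) (clgen F q) S =
  cl_coef a [set p] [set q] * (S == symd [set p] [set q])%:R.
Proof.
rewrite clmul_clbasis_r (bigD1 [set p]) //= /clgen /clbasis eqxx mul1r.
by rewrite big1 ?addr0 // => T' /negbTE ->; rewrite !mul0r.
Qed.

Definition bivector_coef a p q T U : F :=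
  cl_coef a [set p] [set q] * cl_coef a (symd [set p] [set q]) T
  * (U == symd (symd [set p] [set q]) T)%:R.

Lemma spin_repE a (A : I -> I -> F) (U T : evset I) :
  spin_rep a A U T =
  \sum_p \sum_q A p q / (4%:R * a q) * bivector_coef a p q (val T) (val U).
Proof.
rewrite /spin_rep clmul_clbasis_r /spin_elt.
transitivity (\sum_S \sum_p \sum_q A p q / (4%:R * a q) * cl_coef a [set p] [set q]
  * (S == symd [set p] [set q])%:R * cl_coef a S (val T) * (val U == symd S (val T))%:R).
  apply: eq_bigr => S _; rewrite !big_distrl /=; apply: eq_bigr => p _.
  by rewrite !big_distrl /=; apply: eq_bigr => q _; rewrite clmul_clgen !mulrA.
rewrite exchange_big; apply: eq_bigr => p _.
rewrite exchange_big; apply: eq_bigr => q _.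
rewrite (bigD1 (symd [set p] [set q])) //= eqxx mulr1 big1 ?addr0.
  by rewrite /bivector_coef !mulrA.
by move=> S /negbTE ->; rewrite mulr0 !mul0r.
Qed.

End CliffordCoefficients.

Lemma prod_nat_eq_forall (F : fieldType) (J : finType) (i : J) (b : J -> bool) :
  \prod_(i' | i' != i) ((b i')%:R : F) = ([forall i', (i' != i) ==> b i'])%:R.
Proof.
case: (boolP [forall i', _]) => [/forallP h|].
  by rewrite big1 // => i' ne_i'i; rewrite (implyP (h i') ne_i'i).
rewrite negb_forall => /existsP[i']; rewrite negb_imply => /andP[ne_i'i b_i'F].
by rewrite (bigD1 i') //= (negbTE b_i'F) mul0r.
Qed.

Lemma odd_sum_odd (J : finType) (f : J -> nat) :
  odd (\sum_i f i) = odd (\sum_i odd (f i)).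
Proof.
rewrite !(big_morph odd oddD (erefl (odd 0))).
by apply: eq_bigr => i _; case: (odd (f i)).
Qed.

Lemma enum_rank_index (T : finType) (x : T) : val (enum_rank x) = index x (enum T).
Proof. by rewrite -[in RHS](nth_enum_rank x x) index_uniq ?enum_uniq // -cardE. Qed.

Lemma index_allpairs (T1 T2 : eqType) (s1 : seq T1) (s2 : seq T2) x1 x2 :
  x1 \in s1 -> x2 \in s2 ->
  index (x1, x2) [seq (y1, y2) | y1 <- s1, y2 <- s2] =
  (index x1 s1 * size s2 + index x2 s2)%N.
Proof.
move=> x1s1 x2s2; elim: s1 x1s1 => // y s IHs /=; rewrite inE index_cat.
have [->|ne_x1y] := eqVneq x1 y => /= [_|x1s].
  have inj_pair : injective (pair y : T2 -> T1 * T2) by move=> u v [].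
  by rewrite map_f // index_map // eqxx mul0n.
have -> : ((x1, x2) \in [seq (y, y2) | y2 <- s2]) = false.
  by apply/mapP => -[u _ [e _]]; rewrite e eqxx in ne_x1y.
by rewrite IHs // size_map mulSn addnA.
Qed.

Lemma enum_rank_pair (T1 T2 : finType) (x : T1 * T2) :
  val (enum_rank x) = (enum_rank x.1 * #|T2| + enum_rank x.2)%N.
Proof.
rewrite !enum_rank_index cardE; case: x => x1 x2 /=.
by rewrite enumT unlock /= /prod_enum index_allpairs ?mem_enum.
Qed.

Lemma ltn_mixed_radix (a b c d n : nat) : (b < n)%N -> (d < n)%N ->
  (a * n + b < c * n + d)%N = (a < c)%N || (a == c) && (b < d)%N.
Proof.
move=> b_lt d_lt; have [a_lt|c_lt|->] := ltngtP a c => /=.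
- by apply/idP; nia.
- by apply/negbTE; rewrite -leqNgt; nia.
- by rewrite ltn_add2l.
Qed.

Lemma ltn_enum_rank_pair (T1 T2 : finType) (p q : T1 * T2) :
  (enum_rank p < enum_rank q)%N =
  (enum_rank p.1 < enum_rank q.1)%N || (p.1 == q.1) && (enum_rank p.2 < enum_rank q.2)%N.
Proof.
rewrite !enum_rank_pair ltn_mixed_radix ?ltn_ord //.
by congr (_ || (_ && _)); apply/eqP/eqP => [/val_inj/enum_rank_inj|->].
Qed.

Section Blocks.
Variables (F : fieldType) (J K : finType).
Implicit Types (T : {set J * K}) (X : {set K}).

Definition block (i : J) X : {set J * K} := [set p | (p.1 == i) && (p.2 \in X)].
Definition slice T (i : J) : {set K} := [set j | (i, j) \in T].
Definition glue (X : J -> {set K}) : {set J * K} := [set p | p.2 \in X p.1].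

Lemma big_pair_fst (R : Type) (idx : R) (op : Monoid.com_law idx) (i : J)
    (G : J * K -> R) :
  \big[op/idx]_(p | p.1 == i) G p = \big[op/idx]_j G (i, j).
Proof.
rewrite -(big_pred1_eq op i (fun u => \big[op/idx]_j G (u, j))).
rewrite (pair_big_dep (fun u => u == i) (fun _ _ => true) (fun u v => G (u, v))) /=.
by apply: eq_big => [[u v]|[u v]] //=; rewrite andbT.
Qed.

Lemma big_pair_fst_out (R : Type) (idx : R) (op : Monoid.com_law idx) (i : J)
    (G : J * K -> R) :
  (forall p, p.1 != i -> G p = idx) -> \big[op/idx]_p G p = \big[op/idx]_j G (i, j).
Proof.
move=> G_out; rewrite (bigID (fun p => p.1 == i)) /= big_pair_fst.
by rewrite [X in op _ X]big1 ?Monoid.mulm1.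
Qed.

Lemma sum_blockdiag (G : J * K -> J * K -> F) :
  (forall p q, p.1 != q.1 -> G p q = 0) ->
  \sum_p \sum_q G p q = \sum_i \sum_j \sum_l G (i, j) (i, l).
Proof.
move=> G_out; transitivity (\sum_p \sum_l G p (p.1, l)).
  apply: eq_bigr => p _; apply: (@big_pair_fst_out _ _ _ p.1 (G p)).
  by move=> q ne_qp; apply: G_out; rewrite eq_sym.
by rewrite [RHS]pair_big; apply: eq_big => -[i j].
Qed.

(* the sign picked up by an element of block i moving left past the part of
   T lying in the earlier blocks *)
Definition sign_before T (i : J) : F :=
  \prod_(q : J * K | (enum_rank q.1 < enum_rank i)%N) (-1) ^+ (q \in T).

Lemma signr_cl_inv_block (i : J) X T :
  (-1) ^+ cl_inv (block i X) T =
  sign_before T i ^+ #|X| * (-1) ^+ cl_inv X (slice T i) :> F.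
Proof.
rewrite !signr_cl_inv (@big_pair_fst_out _ _ _ i); last first.
  by move=> p ne_pi; apply: big1 => q _; rewrite inE (negbTE ne_pi).
transitivity (\prod_(j1 : K) ((\prod_(q : J * K | (enum_rank q.1 < enum_rank i)%N)
     (-1) ^+ ((j1 \in X) && (q \in T))) *
   \prod_(j2 : K) (-1) ^+ ((j1 \in X) && (j2 \in slice T i)
                           && (enum_rank j2 < enum_rank j1)%N)) : F).
  apply: eq_bigr => j1 _; rewrite (bigID (fun q => q.1 == i)) /= mulrC.
  congr (_ * _).
    rewrite [LHS]big_mkcond [RHS]big_mkcond; apply: eq_bigr => q _.
    rewrite inE ltn_enum_rank_pair /=.
    have [->|ne_qi] := eqVneq q.1 i; first by rewrite ltnn.
    by rewrite eqxx /= orbF; case: (_ < _)%N; rewrite ?andbT ?andbF.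
  rewrite big_pair_fst; apply: eq_bigr => j2 _.
  by rewrite !inE /= ltn_enum_rank_pair /= eqxx ltnn.
rewrite big_split /=; congr (_ * _).
rewrite -prodr_const [RHS]big_mkcond /=; apply: eq_bigr => j1 _.
by case: (j1 \in X) => //=; rewrite big1.
Qed.

Lemma prod_setI_block (a : J * K -> F) (i : J) X T :
  \prod_(p in block i X :&: T) a p = \prod_(j in X :&: slice T i) a (i, j).
Proof.
rewrite big_mkcond (@big_pair_fst_out _ _ _ i) /=; last first.
  by move=> p ne_pi; rewrite !inE (negbTE ne_pi).
by rewrite [RHS]big_mkcond; apply: eq_bigr => j _; rewrite !inE /= eqxx.
Qed.

Lemma cl_coef_block (a : J * K -> F) (i : J) X T :
  cl_coef a (block i X) T =
  sign_before T i ^+ #|X| * cl_coef (fun j => a (i, j)) X (slice T i).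
Proof. by rewrite /cl_coef signr_cl_inv_block prod_setI_block mulrA. Qed.

Lemma set1_block (i : J) (j : K) : [set (i, j)] = block i [set j].
Proof. by apply/setP => -[i' j']; rewrite !inE xpair_eqE. Qed.

Lemma slice_block (i i' : J) X : slice (block i X) i' = if i' == i then X else set0.
Proof. by apply/setP => j; rewrite !inE; case: (i' == i); rewrite ?inE. Qed.

Lemma slice_symd T1 T2 i : slice (symd T1 T2) i = symd (slice T1 i) (slice T2 i).
Proof. by apply/setP => j; rewrite inE (in_symd T1 T2 (i, j)) in_symd !inE. Qed.

Lemma symd_block (i : J) X1 X2 : symd (block i X1) (block i X2) = block i (symd X1 X2).
Proof.
apply/setP => -[i' j]; rewrite (in_symd _ _ (i', j)) !inE /=.
by case: (i' == i); case: (j \in X1); case: (j \in X2).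
Qed.

Lemma sign_before_block (i : J) X : sign_before (block i X) i = 1.
Proof.
apply: big1 => q lt_qi; rewrite inE.
have -> : q.1 == i = false by apply/negbTE; apply: contraTneq lt_qi => ->; rewrite ltnn.
by rewrite expr0.
Qed.

Lemma sign_before_even T i n : ~~ odd n -> sign_before T i ^+ n = 1.
Proof.
move=> even_n; rewrite /sign_before prodrXr -exprM -signr_odd oddM.
by rewrite (negbTE even_n) andbF expr0.
Qed.

(* both block signs vanish: nothing of block i lies before block i, and Ks is even *)
Lemma bivector_coef_block (a : J * K -> F) (i : J) (j l : K) T U :
  let Ks := symd [set j] [set l] in
  bivector_coef a (i, j) (i, l) T U =
  cl_coef (fun k => a (i, k)) [set j] [set l]
  * cl_coef (fun k => a (i, k)) Ks (slice T i) * (U == symd (block i Ks) T)%:R.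
Proof.
move=> Ks; rewrite /bivector_coef !set1_block symd_block !cl_coef_block.
rewrite sign_before_block expr1n mul1r slice_block eqxx sign_before_even ?mul1r //.
by rewrite odd_symd !cards1.
Qed.

Lemma eq_set_slice T1 T2 : (T1 == T2) = [forall i, slice T1 i == slice T2 i].
Proof.
apply/eqP/forallP => [-> //|eq_slices]; apply/setP => -[i j].
by have /eqP/setP/(_ j) := eq_slices i; rewrite !inE.
Qed.

Lemma slice_glue (X : J -> {set K}) i : slice (glue X) i = X i.
Proof. by apply/setP => j; rewrite !inE. Qed.

Lemma card_slice T : #|T| = (\sum_i #|slice T i|)%N.
Proof.
rewrite -sum1_card big_mkcond /=.
transitivity (\sum_i \sum_j (if (i, j) \in T then 1 else 0))%N.
  by rewrite pair_big; apply: eq_big => [[i j]|[i j]].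
apply: eq_bigr => i _; rewrite -sum1_card [RHS]big_mkcond.
by apply: eq_bigr => j _; rewrite inE.
Qed.

End Blocks.

Section Toggle.
Variables (K : finType) (z : K).
Implicit Type X : {set K}.

Definition toggle (b : bool) X := if b then symd X [set z] else X.

Lemma odd_toggle b X : odd #|toggle b X| = b (+) odd #|X|.
Proof. by case: b; rewrite /toggle // odd_symd cards1 addbT. Qed.

Lemma toggleK b : involutive (toggle b).
Proof. by case: b => X; rewrite /toggle // symdK. Qed.

Lemma toggle_symd b A X : toggle b (symd A X) = symd A (toggle b X).
Proof. by case: b; rewrite /toggle // symdA. Qed.

Lemma evenize_proof X : ~~ odd #|toggle (odd #|X|) X|.
Proof. by rewrite odd_toggle addbb. Qed.

Definition evenize X : evset K := exist _ (toggle (odd #|X|) X) (evenize_proof X).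

End Toggle.

Section SpinBlockDecomposition.
Variables (F : fieldType) (r' m' : nat) (a : 'I_r'.+1 * 'I_m'.+1 -> F).
Local Notation J := 'I_r'.+1.
Local Notation K := 'I_m'.+1.
Local Notation I := ('I_r'.+1 * 'I_m'.+1)%type.
Local Notation a_ i := (fun j => a (i, j)).

Lemma card_parity : #|{: {ffun 'I_r' -> bool}}| = (2 ^ r')%N.
Proof. by rewrite card_ffun card_bool card_ord. Qed.

Definition parity_vec (t : 'I_(2 ^ r')) : {ffun 'I_r' -> bool} :=
  enum_val (cast_ord (esym card_parity) t).
Definition parity_idx (e : {ffun 'I_r' -> bool}) : 'I_(2 ^ r') :=
  cast_ord card_parity (enum_rank e).

Lemma parity_vecK : cancel parity_vec parity_idx.
Proof. by move=> t; rewrite /parity_idx /parity_vec enum_valK cast_ordKV. Qed.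

Lemma parity_idxK : cancel parity_idx parity_vec.
Proof. by move=> e; rewrite /parity_vec /parity_idx cast_ordK enum_rankK. Qed.

(* a free parity for each of the first r' blocks; the last block makes the sum even *)
Definition slice_parity (e : {ffun 'I_r' -> bool}) (i : J) : bool :=
  if unlift ord_max i is Some i' then e i' else odd (\sum_i' (e i' : nat)).

Lemma slice_parity_even e : ~~ odd (\sum_i (slice_parity e i : nat)).
Proof.
rewrite (bigD1_ord ord_max) //= /slice_parity unlift_none.
rewrite (eq_bigr (fun i : 'I_r' => (e i : nat))); last by move=> i _; rewrite liftK.
by rewrite oddD; case: (odd (\sum_(i < r') _)).
Qed.

Definition tensor_basis := ('I_(2 ^ r') * {ffun J -> evset K})%type.

Definition decode_set (y : tensor_basis) : {set I} :=
  glue (fun i => toggle ord0 (slice_parity (parity_vec y.1) i) (val (y.2 i))).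

Lemma slice_decode y i :
  slice (decode_set y) i = toggle ord0 (slice_parity (parity_vec y.1) i) (val (y.2 i)).
Proof. exact: slice_glue. Qed.

Lemma odd_slice_decode y i :
  odd #|slice (decode_set y) i| = slice_parity (parity_vec y.1) i.
Proof. by rewrite slice_decode odd_toggle (negbTE (valP (y.2 i))) addbF. Qed.

Lemma decode_proof y : ~~ odd #|decode_set y|.
Proof.
rewrite card_slice odd_sum_odd.
under eq_bigr => i _ do rewrite odd_slice_decode.
exact: slice_parity_even.
Qed.

Definition decode y : evset I := exist _ (decode_set y) (decode_proof y).

Definition encode (S : evset I) : tensor_basis :=
  (parity_idx [ffun i' => odd #|slice (val S) (lift ord_max i')|],
   [ffun i => evenize ord0 (slice (val S) i)]).

Lemma decodeK : cancel decode encode.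
Proof.
move=> [t w]; rewrite /encode /=; congr (_, _).
  rewrite -[RHS]parity_vecK; congr parity_idx; apply/ffunP => i'.
  by rewrite ffunE odd_slice_decode /slice_parity liftK.
apply/ffunP => i; rewrite ffunE; apply: val_inj => /=.
by rewrite odd_slice_decode slice_decode toggleK.
Qed.

Lemma slice_parity_encode S i :
  slice_parity (parity_vec (encode S).1) i = odd #|slice (val S) i|.
Proof.
rewrite /encode /= parity_idxK /slice_parity.
case: unliftP => [j ->|->]; first by rewrite ffunE.
under eq_bigr => i' _ do rewrite ffunE.
rewrite -(odd_sum_odd (fun i' => #|slice (val S) (lift ord_max i')|)).
have := valP S; rewrite /= card_slice (bigD1_ord ord_max) //= oddD.
by case: (odd #|slice _ ord_max|); case: (odd _).
Qed.

Lemma encodeK : cancel encode decode.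
Proof.
move=> S; apply: val_inj; apply/setP => -[i j] /=.
by rewrite /decode_set inE /= slice_parity_encode ffunE /= toggleK inE.
Qed.

Lemma decode_eq_symd_block (i : J) (Ks : {set K}) (y z : tensor_basis) :
  ~~ odd #|Ks| ->
  (decode_set y == symd (block i Ks) (decode_set z)) =
  [&& y.1 == z.1, val (y.2 i) == symd Ks (val (z.2 i)) &
      [forall i', (i' != i) ==> (y.2 i' == z.2 i')]].
Proof.
move=> even_Ks; rewrite eq_set_slice.
apply/forallP/and3P => [eq_slices|[/eqP eq1 /eqP eq_i /forallP eq_out] i'].
  have slice_y i' : slice (decode_set y) i' =
      if i' == i then symd Ks (slice (decode_set z) i') else slice (decode_set z) i'.
    rewrite (eqP (eq_slices i')) slice_symd slice_block.
    by case: (i' == i) => //; rewrite symd0l.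
  have eq_par i' : slice_parity (parity_vec y.1) i' = slice_parity (parity_vec z.1) i'.
    rewrite -!odd_slice_decode slice_y; case: (i' == i) => //.
    by rewrite odd_symd (negbTE even_Ks).
  have eq1 : y.1 = z.1.
    rewrite -(parity_vecK y.1) -(parity_vecK z.1); congr parity_idx.
    by apply/ffunP => k; have := eq_par (lift ord_max k); rewrite /slice_parity liftK.
  split; first by rewrite eq1.
    have := slice_y i; rewrite eqxx !slice_decode eq_par -toggle_symd.
    by move/(congr1 (toggle ord0 (slice_parity (parity_vec z.1) i))); rewrite !toggleK => ->.
  apply/forallP => i'; apply/implyP => ne_i'i.
  have := slice_y i'; rewrite (negbTE ne_i'i) !slice_decode eq_par.
  move/(congr1 (toggle ord0 (slice_parity (parity_vec z.1) i'))).
  by rewrite !toggleK => /val_inj ->.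
rewrite slice_symd slice_block !slice_decode eq1; have [->|ne_i'i] := eqVneq i' i.
  by rewrite eq_i toggle_symd.
by rewrite symd0l; have := eq_out i'; rewrite ne_i'i => /eqP ->.
Qed.

(* e_X = slice_scale i X * e_(X + z) e_z when X is odd: the factor relating a
   monomial of block i to the chosen even basis vector *)
Definition slice_scale (i : J) (X : {set K}) : F :=
  if odd #|X| then cl_coef (a_ i) X [set ord0] else 1.
Definition scale (S : {set I}) : F := \prod_i slice_scale i (slice S i).

Lemma scale_neq0 S : (forall p, a p != 0) -> scale S != 0.
Proof.
move=> a_neq0; apply/prodf_neq0 => i _; rewrite /slice_scale.
by case: (odd _); [apply: cl_coef_neq0 => j | exact: oner_neq0].
Qed.

Lemma slice_scale_symd (i : J) (Ks w : {set K}) e : ~~ odd #|Ks| -> ~~ odd #|w| ->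
  slice_scale i (symd Ks (toggle ord0 e w)) * cl_coef (a_ i) Ks (toggle ord0 e w)
  = cl_coef (a_ i) Ks w * slice_scale i (toggle ord0 e w).
Proof.
move=> even_Ks even_w.
rewrite /slice_scale odd_symd !odd_toggle (negbTE even_Ks) (negbTE even_w) /=.
case: e => /=; last by rewrite mul1r mulr1.
by rewrite /toggle mulrC cl_coef_assoc symdK mulrC.
Qed.

Lemma scale_symd_block (i : J) (Ks w : {set K}) e (T : {set I}) :
  ~~ odd #|Ks| -> ~~ odd #|w| -> slice T i = toggle ord0 e w ->
  scale (symd (block i Ks) T) * cl_coef (a_ i) Ks (slice T i)
  = cl_coef (a_ i) Ks w * scale T.
Proof.
move=> even_Ks even_w slice_T; rewrite /scale (bigD1 i) //= [in RHS](bigD1 i) //=.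
rewrite slice_symd slice_block eqxx slice_T.
have -> : \prod_(i' | i' != i) slice_scale i' (slice (symd (block i Ks) T) i') =
          \prod_(i' | i' != i) slice_scale i' (slice T i').
  by apply: eq_bigr => i' ne_i'i; rewrite slice_symd slice_block (negbTE ne_i'i) symd0l.
set R := \prod_(i' | i' != i) _.
transitivity (slice_scale i (symd Ks (toggle ord0 e w))
              * cl_coef (a_ i) Ks (toggle ord0 e w) * R); first by ring.
by rewrite slice_scale_symd //; ring.
Qed.

Lemma scale_bivector_coef (i : J) (j l : K) (y z : tensor_basis) :
  scale (decode_set y) * bivector_coef a (i, j) (i, l) (decode_set z) (decode_set y)
  = (y.1 == z.1)%:R * bivector_coef (a_ i) j l (val (z.2 i)) (val (y.2 i))
    * \prod_(i' | i' != i) (y.2 i' == z.2 i')%:R * scale (decode_set z).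
Proof.
rewrite bivector_coef_block /bivector_coef prod_nat_eq_forall.
set Ks := symd [set j] [set l].
have even_Ks : ~~ odd #|Ks| by rewrite odd_symd !cards1.
have := decode_eq_symd_block i y z even_Ks.
have [eq_y|] := eqVneq (decode_set y) (symd (block i Ks) (decode_set z)).
  move=> /esym/and3P[/eqP -> /eqP -> ->]; rewrite !eqxx /= eq_y.
  have eq_scale := scale_symd_block (e := slice_parity (parity_vec z.1) i)
                      even_Ks (valP (z.2 i)) (slice_decode z i).
  transitivity (cl_coef (a_ i) [set j] [set l] * (scale (symd (block i Ks) (decode_set z))
                * cl_coef (a_ i) Ks (slice (decode_set z) i))); first by ring.
  by rewrite eq_scale; ring.
move=> _; case: (y.1 == z.1); case: (_ == _); case: [forall _, _] => //= _.
all: by rewrite !mulr0 ?mul0r.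
Qed.

Lemma scale_spin_rep_blockdiag (M : J -> K -> K -> F) (y z : tensor_basis) :
  scale (decode_set y) * spin_rep a (blockdiag M) (decode y) (decode z) =
  copies (2 ^ r') (ext_tensor (fun i => spin_rep (a_ i) (M i))) y z
  * scale (decode_set z).
Proof.
rewrite spin_repE sum_blockdiag; last first.
  by move=> p q ne_pq; rewrite /blockdiag (negbTE ne_pq) !mul0r.
rewrite /copies /ext_tensor big_distrr [in RHS]big_distrr [in RHS]big_distrl /=.
apply: eq_bigr => i _; rewrite spin_repE !(big_distrl, big_distrr) /=.
apply: eq_bigr => j _; rewrite !(big_distrl, big_distrr) /=; apply: eq_bigr => l _.
by rewrite /blockdiag /= eqxx /= mul1r mulrCA scale_bivector_coef; ring.
Qed.

Lemma sum_decode (y : tensor_basis) (G : evset I -> F) :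
  (forall S, encode S != y -> G S = 0) -> \sum_S G S = G (decode y).
Proof.
move=> G_out; rewrite (bigD1 (decode y)) //= big1 ?addr0 // => S ne_S.
by apply: G_out; apply: contraNneq ne_S => <-; rewrite encodeK.
Qed.

Lemma spin_rep_blockdiag_iso (dom : (J -> K -> K -> F) -> Prop) :
  (forall p, a p != 0) ->
  rep_iso dom (fun M => spin_rep a (blockdiag M))
    (fun M => copies (2 ^ r') (ext_tensor (fun i => spin_rep (a_ i) (M i)))).
Proof.
move=> a_neq0; have nz_scale S := scale_neq0 S a_neq0.
exists (fun y S => (encode S == y)%:R * scale (val S)),
       (fun S y => (encode S == y)%:R / scale (val S)).
split.
- move=> y y'; rewrite (sum_decode (y := y)); last by move=> S /negbTE ->; rewrite !mul0r.
  by rewrite decodeK eqxx mul1r mulrC divfK.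
- move=> S S'; rewrite (bigD1 (encode S)) //= big1 ?addr0; last first.
    by move=> y ne_y; rewrite eq_sym (negbTE ne_y) !mul0r.
  rewrite eqxx mul1r; have [<-|ne_SS'] := eqVneq S S'.
    by rewrite eqxx mul1r mulVf.
  have -> : (encode S' == encode S) = false.
    by apply/negbTE; apply: contra_neq ne_SS' => e; rewrite -(encodeK S) -e encodeK.
  by rewrite !mul0r mulr0.
- move=> M _ y S; rewrite (sum_decode (y := y)); last first.
    by move=> S' /negbTE ->; rewrite !mul0r.
  rewrite (bigD1 (encode S)) //= big1 ?addr0; last first.
    by move=> y' ne_y'; rewrite eq_sym (negbTE ne_y') mul0r mulr0.
  rewrite decodeK !eqxx !mul1r -{1 2}(encodeK S) scale_spin_rep_blockdiag.
  by rewrite decodeK; congr (_ * _); rewrite -[in RHS](encodeK S).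
Qed.

End SpinBlockDecomposition.

Lemma kHom_neq0 (F0 : fieldType) (L : fieldExtType F0) (K E : {subfield L}) (f : 'End(L)) x :
  kHom K E f -> x \in E -> x != 0 -> f x != 0.
Proof.
move=> /kHomP_tmp[fixK fM] Ex nz_x.
have : f x * f x^-1 = 1 by rewrite -fM ?memvV // mulfV // fixK // mem1v.
by apply: contra_eq_neq => ->; rewrite mul0r eq_sym oner_eq0.
Qed.

Theorem corollary1
  (F : splittingFieldType rat) (L : {subfield F})
  (r m : nat) (sig : 'I_r -> 'End(F)) (d : 'I_m -> F)
  (hLtr : totally_real L)
  (hr : \dim L = r)
  (hsig : forall i, kHom 1%VS L (sig i))
  (hsig_inj : forall i j, {in L, sig i =1 sig j} -> i = j)
  (hsig_all : forall f : 'End(F), kHom 1%VS L f ->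
                exists i, {in L, f =1 sig i})
  (hm : (5 <= m)%N)
  (hdL : forall j, d j \in L)
  (hd0 : forall j, d j != 0)
  (hsqrtm1 : exists z : F, z ^+ 2 = -1)
  (hsqrtd : forall i j, exists s : F, s ^+ 2 = sig i (d j)) :
  rep_iso
    (fun M : 'I_r -> 'I_m -> 'I_m -> F =>
       forall i, is_so (fun j => sig i (d j)) (M i))
    (fun M => spin_rep (fun p : 'I_r * 'I_m => sig p.1 (d p.2)) (blockdiag M))
    (fun M => copies (2 ^ (r - 1))%N
                (ext_tensor (fun i => spin_rep (fun j => sig i (d j)) (M i)))).
Proof.
have sig_d_neq0 (p : 'I_r * 'I_m) : sig p.1 (d p.2) != 0.
  exact: kHom_neq0 (hsig p.1) (hdL p.2) (hd0 p.2).
have r_gt0 : (0 < r)%N by rewrite -hr adim_gt0.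
have m_gt0 : (0 < m)%N by apply: leq_trans hm.
clear -sig_d_neq0 r_gt0 m_gt0.
case: r r_gt0 => // r' _ in sig sig_d_neq0 *.
case: m m_gt0 => // m' _ in d sig_d_neq0 *.
by rewrite subSS subn0; apply: spin_rep_blockdiag_iso.
Qed.
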